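(* Let $X$ be a complex Banach space with open unit ball $B$, let $H(B)$ be a uniform algebra with $A_u(B)\subseteq H(B)\subseteq H^\infty(B)$, let $x_0^{**}\in\bar B^{**}$ and $f\in H(B)$. If $\hat f$ is constant on $M^{\mathcal P}_{x_0^{**}}$, say $\hat f(M^{\mathcal P}_{x_0^{**}})=\{\lambda\}$, then every net $(x_\alpha)\subset B$ converging to $x_0^{**}$ in $w(X^{**},P(X))$ satisfies $\lim_\alpha f(x_\alpha)=\lambda$.
   Context: $H^\infty(B)$: bounded holomorphic functions on $B$ with sup norm; $A_u(B)$: uniformly continuous holomorphic functions on $B$ (uniform closure of the continuous polynomials $P(X)$ on $B$); a uniform algebra between them is a closed unital subalgebra of $H^\infty(B)$ containing $A_u(B)$. $M_{H(B)}$ is its spectrum, $\hat f$ the Gelfand transform. $\bar B^{**}$ is the closed unit ball of $X^{**}$; $\tilde P$ (resp. $\tilde g$) is the Aron–Berner extension of $P\in P(X)$ (resp. $g\in A_u(B)$, extended continuously to $\bar B^{**}$). $w(X^{**},P(X))$ is the weakest topology on $X^{**}$ making all $\tilde P$ continuous. The polynomial fiber is $M^{\mathcal P}_{x_0^{**}}=\{\tau\in M_{H(B)}:\tau(g)=\tilde g(x_0^{**})\ \forall g\in A_u(B)\}$. *)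

From HB Require Import structures.
From mathcomp Require Import all_boot all_order all_algebra.
From mathcomp Require Import reals.
From mathcomp Require Import complex.
Set Implicit Arguments. Unset Strict Implicit. Unset Printing Implicit Defensive.
Import Order.TTheory GRing.Theory Num.Theory.
Local Open Scope ring_scope.

Definition cR {R : realType} (r : R) : R[i] := Complex r 0.

Section Banach.
Variables (R : realType) (X : lmodType R[i]) (nrm : X -> R).
Local Notation C := R[i].

Definition is_norm : Prop :=
  [/\ forall x, 0 <= nrm x,
      forall x, nrm x = 0 -> x = 0,
      forall (a : C) x, cR (nrm (a *: x)) = `|a| * cR (nrm x)
    & forall x y, nrm (x + y) <= nrm x + nrm y].

Definition complete_norm : Prop :=
  forall u : nat -> X,
    (forall e : R, 0 < e -> exists N, forall m n, (N <= m)%N -> (N <= n)%N ->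
        nrm (u m - u n) < e) ->
    exists l, forall e : R, 0 < e -> exists N, forall n, (N <= n)%N -> nrm (u n - l) < e.

Definition Ball := {x : X | nrm x < 1}.

Definition dual_el (phi : X -> C) : Prop :=
  (forall (a : C) x y, phi (a *: x + y) = a * phi x + phi y) /\
  exists M : R, forall x, `|phi x| <= cR (M * nrm x).

(* elements of the closed unit ball of X^** : z acts on functionals;
   linear on X^* and of norm <= 1, i.e. |z phi| <= M whenever M >= 0 bounds
   phi on the unit ball. *)
Definition bidual_ball (z : (X -> C) -> C) : Prop :=
  (forall (a : C) phi psi, dual_el phi -> dual_el psi ->
      z (fun x => a * phi x + psi x) = a * z phi + z psi) /\
  (forall phi (M : R), dual_el phi -> 0 <= M ->
      (forall x, `|phi x| <= cR (M * nrm x)) -> `|z phi| <= cR M).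

Definition emb (x : X) : (X -> C) -> C := fun phi => phi x.

(* m-linear forms, represented on argument lists of length m *)
Definition mlin (m : nat) (A : seq X -> C) : Prop :=
  forall s1 s2, (size s1 + (size s2).+1)%N = m ->
    forall (a : C) x y,
      A (s1 ++ (a *: x + y) :: s2) = a * A (s1 ++ x :: s2) + A (s1 ++ y :: s2).
Definition msym (m : nat) (A : seq X -> C) : Prop :=
  forall s t, size s = m -> perm_eq s t -> A s = A t.
Definition mbdd (m : nat) (A : seq X -> C) : Prop :=
  exists M : R, forall s, size s = m -> `|A s| <= cR (M * \prod_(x <- s) nrm x).
Definition msymform (m : nat) (A : seq X -> C) : Prop :=
  [/\ mlin m A, msym m A & mbdd m A].

Definition form0 : seq X -> C := fun _ => 0.

(* P is a continuous polynomial, P = sum_m \hat A_m, with A_m the symmetric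
   continuous m-linear form given by the m-th entry of As *)
Definition poly_rep (P : X -> C) (As : seq (seq X -> C)) : Prop :=
  (forall i, (i < size As)%N -> msymform i (nth form0 As i)) /\
  forall x, P x = \sum_(i < size As) nth form0 As i (nseq i x).

Definition is_poly (P : X -> C) : Prop := exists As, poly_rep P As.

(* Aron--Berner extension of an m-linear form evaluated at (z,...,z):
   z(x1 |-> z(x2 |-> ... z(xm |-> A [x1;...;xm]))) *)
Fixpoint ABnest (z : (X -> C) -> C) (n : nat) (F : seq X -> C) : C :=
  match n with
  | 0 => F [::]
  | n'.+1 => z (fun x => ABnest z n' (fun s => F (x :: s)))
  end.

Definition ABpoly (As : seq (seq X -> C)) (z : (X -> C) -> C) : C :=
  \sum_(i < size As) ABnest z i (nth form0 As i).

Definition Au (g : Ball -> C) : Prop :=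
  forall e : R, 0 < e -> exists P, is_poly P /\ forall x : Ball, `|g x - P (val x)| < cR e.

(* \tilde g (z) = v : the (continuous) extension of g in A_u(B) to the closed
   ball of X^**, as the limit of \tilde P_n(z) for polynomials P_n -> g
   uniformly on B *)
Definition AB_Au (g : Ball -> C) (z : (X -> C) -> C) (v : C) : Prop :=
  forall (Ps : nat -> X -> C) (Ass : nat -> seq (seq X -> C)),
    (forall n, poly_rep (Ps n) (Ass n)) ->
    (forall e : R, 0 < e -> exists N, forall n, (N <= n)%N ->
        forall x : Ball, `|g x - Ps n (val x)| < cR e) ->
    forall e : R, 0 < e -> exists N, forall n, (N <= n)%N ->
        `|ABpoly (Ass n) z - v| < cR e.

Definition holo (f : Ball -> C) : Prop :=
  forall x : Ball, exists L, dual_el L /\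
    forall e : R, 0 < e -> exists d : R, 0 < d /\ forall y : Ball,
      nrm (val y - val x) < d ->
      `|f y - f x - L (val y - val x)| <= cR (e * nrm (val y - val x)).
Definition Hinf (f : Ball -> C) : Prop :=
  (exists M : R, forall x, `|f x| <= cR M) /\ holo f.

Definition uniform_algebra (H : (Ball -> C) -> Prop) : Prop :=
  (forall f, Au f -> H f) /\
  (forall f, H f -> Hinf f) /\
  H (fun _ => 1) /\
  (forall (a : C) f g, H f -> H g -> H (fun x => a * f x + g x)) /\
  (forall f g, H f -> H g -> H (fun x => f x * g x)) /\
  (forall f, (forall e : R, 0 < e -> exists g, H g /\
                    forall x, `|f x - g x| < cR e) -> H f).

Definition spectrum (H : (Ball -> C) -> Prop) (tau : (Ball -> C) -> C) : Prop :=
  [/\ forall (a : C) f g, H f -> H g ->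
        tau (fun x => a * f x + g x) = a * tau f + tau g,
      forall f g, H f -> H g -> tau (fun x => f x * g x) = tau f * tau g
    & tau (fun _ => 1) = 1].

Definition poly_fiber (H : (Ball -> C) -> Prop) (z : (X -> C) -> C)
    (tau : (Ball -> C) -> C) : Prop :=
  spectrum H tau /\ forall g, Au g -> forall v, AB_Au g z v -> tau g = v.

End Banach.

Definition directed {I : Type} (le : I -> I -> Prop) : Prop :=
  [/\ inhabited I, forall a, le a a, (forall a b c, le a b -> le b c -> le a c)
    & forall a b, exists c, le a c /\ le b c].

Definition net_conv {R : realType} {I : Type} (le : I -> I -> Prop)
    (u : I -> R[i]) (l : R[i]) : Prop :=
  forall e : R, 0 < e -> exists a0, forall a, le a0 a -> `|u a - l| < cR e.

(* convergence x_a -> z in w(X^**, P(X)): \tilde P (x_a) -> \tilde P (z)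
   for every continuous polynomial P *)
Definition wP_conv {R : realType} {X : lmodType R[i]} (nrm : X -> R)
    {I : Type} (le : I -> I -> Prop) (x : I -> X) (z : (X -> R[i]) -> R[i]) : Prop :=
  forall P As, poly_rep nrm P As ->
    net_conv le (fun a => ABpoly As (emb (x a))) (ABpoly As z).

(* A net converges as soon as it converges along every ultrafilter U finer
   than its tail filter.  Along such a U, bounded subsets of C being compact,
   tau g := lim_U g(x_a) exists for every g in H(B), and it is a character of
   H(B).  Convergence of (x_a) to x0 in w(X**, P(X)) says tau P = \tilde P(x0)
   for continuous polynomials P, and uniform approximation carries this over
   to A_u(B); so tau lies in the polynomial fiber over x0, whence
   lim_U f(x_a) = tau f = lambda. *)

From HB Require Import structures.
From mathcomp Require Import all_boot all_order all_algebra.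
From mathcomp Require Import reals complex.
From mathcomp Require Import all_classical topology normedtype.
From mathcomp Require Import lra.
Import interval_inference.

Set Implicit Arguments.
Unset Strict Implicit.
Unset Printing Implicit Defensive.

Import Order.TTheory GRing.Theory Num.Theory.
Import numFieldNormedType.Exports.
Local Open Scope classical_set_scope.
Local Open Scope ring_scope.
Local Open Scope complex_scope.

Lemma ultra_fmap {T V : Type} (f : T -> V) (F : set_system T) :
  UltraFilter F -> UltraFilter (f @ F).
Proof.
move=> FU; split; first exact: fmap_proper_filter.
move=> G GF sFG; rewrite predeqE => A; split; last exact: sFG.
move=> GA; have [//|FnA] := in_ultra_setVsetC (f @^-1` A) FU.
have GnA : G (~` A) by apply: sFG.
by have /filter_ex [? []] : G (A `&` ~` A) by exact: filterI.
Qed.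

Section ComplexLimits.
Variable R : realType.
(* R[i] carries no topology; its copy R[i]^o is a normed field over itself. *)
Local Notation C := R[i]^o.

Lemma normc_real (r : R) : `|r%:C| = `|r|%:C.
Proof. by rewrite normc_def /= expr0n addr0 sqrtr_sqr. Qed.

Lemma normc_ge_Im (z : R[i]) : `|complex.Im z|%:C <= `|z|.
Proof. by rewrite normc_def lecR -sqrtr_sqr ler_wsqrtr ?lerDr ?sqr_ge0. Qed.

Lemma cvgcPdist_lt {T} (F : set_system T) {FF : Filter F} (u : T -> C) (l : C) :
  u @ F --> l <-> forall r : R, 0 < r -> \forall a \near F, `|u a - l| < r%:C.
Proof.
rewrite cvgrPdist_lt; split=> [cvg_u r r0 | near_u [er ei]].
  by near do rewrite distrC; apply: cvg_u; rewrite ltcR.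
rewrite ltcE /= => /andP[/eqP -> er0].
by near do rewrite distrC; apply: near_u.
Unshelve. all: end_near.
Qed.

Lemma cvg_real_complex {T} (F : set_system T) {FF : Filter F} (v : T -> R) (p : R) :
  v @ F --> p -> (fun a => (v a)%:C : C) @ F --> (p%:C : C).
Proof.
move/cvgrPdist_lt=> cvg_v; apply/cvgcPdist_lt => r /cvg_v.
by apply: filterS => a; rewrite -rmorphB normc_real ltcR distrC.
Qed.

Lemma cvg_ReIm {T} (F : set_system T) {FF : Filter F} (u : T -> C) (p q : R) :
  (fun a => complex.Re (u a)) @ F --> p ->
  (fun a => complex.Im (u a)) @ F --> q -> u @ F --> (p +i* q : C).
Proof.
move=> /cvg_real_complex cvg_Re /cvg_real_complex cvg_Im.
have -> : u = (fun a => (complex.Re (u a))%:C + 'i * (complex.Im (u a))%:C).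
  by apply: funext => a; exact: complexE.
rewrite (complexE (p +i* q)) /=.
apply: cvgD; first exact: cvg_Re.
exact: cvgMl_tmp cvg_Im.
Qed.

Section UltraLimits.
Variables (T : Type) (U : set_system T).
Hypothesis U_ultra : UltraFilter U.

Lemma ultra_bounded_cvg_real (v : T -> R) (M : R) :
  (forall a, `|v a| <= M) -> exists p : R, v @ U --> p.
Proof.
move=> v_bounded.
have vU_ultra : UltraFilter (v @ U) by exact: ultra_fmap.
have vU_segment : (v @ U) `[-M, M]%classic.
  rewrite /fmap /=; apply: filterS (@filterT _ U _) => a _ /=.
  by rewrite in_itv /= -ler_norml v_bounded.
have [p [_]] := @segment_compact R (- M) M _ _ vU_segment.
by rewrite ultra_cvg_clusterE //; exists p.
Qed.

Lemma ultra_bounded_cvg (u : T -> C) (M : R) :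
  (forall a, `|u a| <= M%:C) -> exists l : C, u @ U --> l.
Proof.
move=> u_bounded.
have [p cvg_Re] : exists p : R, (fun a => complex.Re (u a)) @ U --> p.
  apply: (@ultra_bounded_cvg_real _ M) => a.
  by rewrite -lecR (le_trans (normc_ge_Re _)).
have [q cvg_Im] : exists q : R, (fun a => complex.Im (u a)) @ U --> q.
  apply: (@ultra_bounded_cvg_real _ M) => a.
  by rewrite -lecR (le_trans (normc_ge_Im _)).
by exists (p +i* q); exact: cvg_ReIm.
Qed.

End UltraLimits.

Section Nets.
Variables (I : Type) (le : I -> I -> Prop).

Lemma net_conv_ultra (u : I -> C) (l : C) : directed le ->
  (forall U, UltraFilter U -> (forall a0, U [set a | le a0 a]) -> u @ U --> l) ->
  net_conv le u l.
Proof.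
case=> [[i0] _ le_trans le_ub] ultra_cvg e e0.
apply: contrapT => /forallNP far.
pose far_from a0 := [set a | le a0 a /\ ~ `|u a - l| < e%:C].
have far_filter : ProperFilter (filter_from setT far_from).
  apply: filter_from_proper => [|a0 _]; last first.
    have /existsNP[a /not_implyP[le_a0a far_a]] := far a0.
    by exists a.
  apply: filter_from_filter; first by exists i0.
  move=> a0 b0 _ _; have [c [le_a0c le_b0c]] := le_ub a0 b0.
  by exists c => // a [le_ca far_a]; split; split=> //; apply: le_trans le_ca.
have [U [U_ultra sU]] := ultraFilterLemma far_filter.
have U_tails a0 : U [set a | le a0 a] by apply: sU; exists a0 => // a [].
have U_far : U [set a | ~ `|u a - l| < e%:C] by apply: sU; exists i0 => // a [].
have /cvgcPdist_lt/(_ e e0) U_near := ultra_cvg U U_ultra U_tails.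
by have [a []] := filter_ex (filterI U_near U_far).
Qed.

End Nets.
End ComplexLimits.

Lemma ABnest_emb (R : realType) (X : lmodType R[i]) (y : X) n F :
  ABnest (emb y) n F = F (nseq n y).
Proof. by elim: n F => [|n IHn] F //=; rewrite /emb IHn. Qed.

Lemma ABpoly_emb (R : realType) (X : lmodType R[i]) (nrm : X -> R) P As y :
  poly_rep nrm P As -> ABpoly As (emb y) = P y.
Proof.
by case=> _ ->; rewrite /ABpoly; apply: eq_bigr => i _; exact: ABnest_emb.
Qed.

Lemma Au_poly_seq (R : realType) (X : lmodType R[i]) (nrm : X -> R)
    (g : Ball nrm -> R[i]) :
  Au g -> exists (Ps : nat -> X -> R[i]) (Ass : nat -> seq (seq X -> R[i])),
    (forall n, poly_rep nrm (Ps n) (Ass n)) /\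
    forall e : R, 0 < e -> exists N, forall n, (N <= n)%N ->
      forall y, `|g y - Ps n (val y)| < cR e.
Proof.
move=> g_Au.
have approx n : exists PA : (X -> R[i]) * seq (seq X -> R[i]),
    poly_rep nrm PA.1 PA.2 /\ forall y, `|g y - PA.1 (val y)| < cR n.+1%:R^-1.
  have [P [[As P_rep] P_approx]] := g_Au n.+1%:R^-1 ltac:(by rewrite invr_gt0).
  by exists (P, As).
have [PA PA_spec] := choice approx.
exists (fun n => (PA n).1), (fun n => (PA n).2); split=> [n|e e0].
  exact: (PA_spec n).1.
have [N _ N_small] := near_infty_natSinv_lt (PosNum e0).
exists N => n /N_small n_small y.
by apply: lt_trans ((PA_spec n).2 y) _; rewrite ltcR.
Qed.

Section UltraEvaluation.
Variables (R : realType) (X : lmodType R[i]) (nrm : X -> R).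
Variables (H : (Ball nrm -> R[i]) -> Prop) (x0 : (X -> R[i]) -> R[i]).
Variables (I : Type) (le : I -> I -> Prop) (x : I -> Ball nrm) (U : set_system I).
Hypotheses (U_ultra : UltraFilter U) (U_tails : forall a0, U [set a | le a0 a]).
Hypothesis H_bounded : forall g, H g -> exists M : R, forall y, `|g y| <= cR M.
Hypothesis x_conv : wP_conv nrm le (fun a => val (x a)) x0.

Local Notation C := R[i]^o.

Definition ultra_eval (g : Ball nrm -> R[i]) : R[i] :=
  lim ((fun a => g (x a) : C) @ U).

Lemma ultra_evalE g (v : C) : (fun a => g (x a) : C) @ U --> v -> ultra_eval g = v.
Proof. by move=> cvg_v; rewrite /ultra_eval (cvg_lim (@norm_hausdorff _ C) cvg_v). Qed.

Lemma ultra_eval_cvg g : H g -> (fun a => g (x a) : C) @ U --> (ultra_eval g : C).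
Proof.
move=> /H_bounded[M g_bounded].
have [l cvg_l] := @ultra_bounded_cvg R I U U_ultra _ M (fun a => g_bounded (x a)).
by rewrite (ultra_evalE cvg_l).
Qed.

Lemma ultra_eval_spectrum : spectrum H ultra_eval.
Proof.
split=> [c g h Hg Hh | g h Hg Hh | ]; apply: ultra_evalE.
- apply: cvgD; last exact: ultra_eval_cvg.
  exact: cvgMl_tmp (ultra_eval_cvg Hg).
- exact: cvgM (ultra_eval_cvg Hg) (ultra_eval_cvg Hh).
- exact: cvg_cst.
Qed.

Lemma ultra_eval_Au g v : Au g -> AB_Au g x0 v -> ultra_eval g = v.
Proof.
move=> /Au_poly_seq[Ps [Ass [Ps_rep Ps_cvg]]] /(_ Ps Ass Ps_rep Ps_cvg) AB_cvg.
apply: ultra_evalE; apply/cvgcPdist_lt => r r0.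
have r30 : 0 < r / 3 by rewrite divr_gt0.
have [N1 AB_near] := AB_cvg _ r30.
have [N2 Ps_near] := Ps_cvg _ r30.
pose n := maxn N1 N2.
have [a0 x_near] := x_conv (Ps_rep n) r30.
apply: filterS (U_tails a0) => a /x_near /=.
rewrite (ABpoly_emb _ (Ps_rep n)) => xPn_near.
have gPn_near := Ps_near n (leq_maxr _ _) (x a).
have ABv_near := AB_near n (leq_maxl _ _).
have -> : g (x a) - v = (g (x a) - Ps n (val (x a))) +
    (Ps n (val (x a)) - ABpoly (Ass n) x0) + (ABpoly (Ass n) x0 - v).
  by rewrite !addrA !subrK.
have -> : r%:C = (r / 3)%:C + (r / 3)%:C + (r / 3)%:C.
  by rewrite -!rmorphD; congr _%:C; lra.
rewrite (le_lt_trans (ler_normD _ _)) // ltrD //.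
by rewrite (le_lt_trans (ler_normD _ _)) // ltrD.
Qed.

Lemma ultra_eval_poly_fiber : poly_fiber H x0 ultra_eval.
Proof.
split=> [|g g_Au v]; first exact: ultra_eval_spectrum.
exact: ultra_eval_Au.
Qed.

End UltraEvaluation.

Theorem mainTheorem2 (R : realType) (X : lmodType R[i]) (nrm : X -> R)
  (Hnorm : is_norm nrm) (Hcompl : complete_norm nrm)
  (H : (Ball nrm -> R[i]) -> Prop) (HH : uniform_algebra H)
  (x0 : (X -> R[i]) -> R[i]) (Hx0 : bidual_ball nrm x0)
  (f : Ball nrm -> R[i]) (Hf : H f) (lam : R[i])
  (Hconst : (exists tau, poly_fiber H x0 tau) /\
            (forall tau, poly_fiber H x0 tau -> tau f = lam))
  (I : Type) (le : I -> I -> Prop) (Hdir : directed le)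
  (x : I -> Ball nrm) (Hconv : wP_conv nrm le (fun a => val (x a)) x0) :
  net_conv le (fun a => f (x a)) lam.
Proof.
have H_bounded g : H g -> exists M : R, forall y, `|g y| <= cR M.
  by case: HH => _ [H_Hinf _] /H_Hinf[[M g_bounded] _]; exists M.
apply: net_conv_ultra Hdir _ => U U_ultra U_tails.
have fiber := ultra_eval_poly_fiber U_ultra U_tails H_bounded Hconv.
rewrite -(Hconst.2 _ fiber); exact: ultra_eval_cvg U_ultra H_bounded _ Hf.
Qed.
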